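(* Let $f(p):=D(a_0,\ldots,a_n;p)$ be an optimal penalty function, i.e. one minimizing the sup-norm $\|D(a_0,\ldots,a_n;\cdot)\|_\infty$ over all choices $a_0,\ldots,a_n\in[0,1]$ (no ordering of the $a_i$ is assumed), and let $M(f):=\{x\in[0,1]: f(x)=\|f\|_\infty\}$ be its set of absolute maxima. Then: (i) $M(f)\cap\{a_0,\ldots,a_n\}=\emptyset$; (ii) $M(f)\cap[0,\min_i a_i)\neq\emptyset$ and $M(f)\cap(\max_i a_i,1]\neq\emptyset$; (iii) $a_0\le 1/2\le a_n$ and $M(f)\cap(a_0,a_n)\neq\emptyset$.
   Context: For an integer $n\ge1$ and $a_0,\ldots,a_n\in[0,1]$ (where $a_k$ is the estimate of the heads-probability $p$ of a biased coin when $k$ heads are observed in $n$ tosses), the penalty (risk) function is $D(a_0,\ldots,a_n;p)=\sum_{k=0}^n \binom{n}{k}p^k(1-p)^{n-k}|p-a_k|$ for $p\in[0,1]$. A choice $a_0,\ldots,a_n$ is called optimal if it minimizes $\|D(a_0,\ldots,a_n;\cdot)\|_\infty$ over $[0,1]$, and the corresponding $D$ is called an optimal penalty function. *)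

From HB Require Import structures.
From mathcomp Require Import all_boot all_order all_algebra.
From mathcomp Require Import all_classical all_reals.
Set Implicit Arguments. Unset Strict Implicit. Unset Printing Implicit Defensive.
Import Order.TTheory GRing.Theory Num.Theory.
Local Open Scope ring_scope.
Local Open Scope classical_set_scope.

Definition unit_int (R : realType) : set R := [set p | 0 <= p <= 1].

Definition penalty (R : realType) (n : nat) (a : 'I_n.+1 -> R) (p : R) : R :=
  \sum_(k < n.+1) ('C(n, k))%:R * p ^+ k * (1 - p) ^+ (n - k) * `|p - a k|.

Definition supnorm01 (R : realType) (f : R -> R) : R :=
  sup ((fun p => `|f p|) @` @unit_int R).

Definition admissible (R : realType) (n : nat) (a : 'I_n.+1 -> R) : Prop :=
  forall k, 0 <= a k <= 1.

Definition optimal (R : realType) (n : nat) (a : 'I_n.+1 -> R) : Prop :=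
  admissible a /\
  forall b : 'I_n.+1 -> R, admissible b ->
    supnorm01 (penalty a) <= supnorm01 (penalty b).

Definition absmax (R : realType) (f : R -> R) : set R :=
  [set x | @unit_int R x /\ f x = supnorm01 f].

Definition amin (R : realType) (n : nat) (a : 'I_n.+1 -> R) : R :=
  \big[Num.min/a ord0]_(i < n.+1) a i.
Definition amax (R : realType) (n : nat) (a : 'I_n.+1 -> R) : R :=
  \big[Num.max/a ord0]_(i < n.+1) a i.

(* For a direction d of change of the estimates, slope a d x x is the right
   derivative at t = 0 of D(a + t d; x), and slope a d x q bounds the rate of
   change of D(a + t d; q) for q near x.  By compactness of [0, 1], if this slope
   is negative at every absolute maximum, a small step along d lowers the sup
   norm; so for an optimal a every feasible d has a maximum where it is >= 0.
   Near a node a_i in (0, 1) the summand w_i(p) |p - a_i| has a convex corner: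
   the second difference of D at a_i is at least h w_i(a_i + h) - O(h^2) > 0, so
   a_i is not a maximum.  If no maximum lay below min a_k, raising the smallest
   estimates (and lowering a_0 when 0 is a maximum) would be a descent
   direction, a slight raise of a_n taking care of a maximum at 1.  The
   reflection p -> 1 - p, a_k -> 1 - a_(n-k) gives a maximum above max a_k,
   hence all a_k lie in (0, 1), which yields (i).  Finally D(0) = a_0 and
   D(1) = 1 - a_n are at most the optimal norm, itself at most 1/2 (the norm
   for the constant estimate 1/2); and if no maximum lay in (a_0, a_n),
   lowering a_0 and raising a_n would be a descent direction. *)

From HB Require Import structures.
From mathcomp Require Import all_boot all_order all_algebra.
From mathcomp Require Import all_classical all_reals.
From mathcomp Require Import topology normedtype derive.
From mathcomp Require Import ring lra.
Import Order.TTheory GRing.Theory Num.Theory.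
Import numFieldNormedType.Exports.
Local Open Scope ring_scope.
Local Open Scope classical_set_scope.
Set Implicit Arguments. Unset Strict Implicit. Unset Printing Implicit Defensive.

Section Bernstein.
Variable R : realFieldType.
Implicit Types (n k : nat) (p : R).

Definition bernstein n k p : R := 'C(n, k)%:R * p ^+ k * (1 - p) ^+ (n - k).

Definition bernstein_poly n k : {poly R} := 'C(n, k)%:R *: ('X^k * (1 - 'X) ^+ (n - k)).

Lemma horner_bernstein n k p : (bernstein_poly n k).[p] = bernstein n k p.
Proof. by rewrite /bernstein_poly /bernstein !hornerE. Qed.

Lemma bernstein_ge0 n k p : 0 <= p <= 1 -> 0 <= bernstein n k p.
Proof. by move=> /andP[p0 p1]; rewrite !mulr_ge0 ?exprn_ge0 ?subr_ge0. Qed.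

Lemma bernstein_le_binomial n k p : 0 <= p <= 1 -> bernstein n k p <= 'C(n, k)%:R.
Proof.
move=> /andP[p0 p1]; rewrite /bernstein -mulrA ler_piMr ?ler0n //.
by rewrite mulr_ile1 ?exprn_ge0 ?exprn_ile1 ?subr_ge0 // lerBlDr lerDl.
Qed.

Lemma bernstein_gt0 n k p : (k <= n)%N -> 0 < p < 1 -> 0 < bernstein n k p.
Proof.
by move=> kn /andP[p0 p1]; rewrite !mulr_gt0 ?exprn_gt0 ?ltr0n ?bin_gt0 ?subr_gt0.
Qed.

Lemma bernstein_ge_prod n k p : (k <= n)%N -> 0 <= p <= 1 ->
  p ^+ n * (1 - p) ^+ n <= bernstein n k p.
Proof.
move=> kn /andP[p0 p1]; have q0 : 0 <= 1 - p by rewrite subr_ge0.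
have C1 : 1 <= 'C(n, k)%:R :> R by rewrite ler1n bin_gt0.
rewrite /bernstein -mulrA (le_trans _ (ler_peMl _ C1)) ?mulr_ge0 ?exprn_ge0 //.
by rewrite ler_pM ?exprn_ge0 ?ler_wiXn2l ?leq_subr // lerBlDr lerDl.
Qed.

Lemma bernstein0 n p : bernstein n 0 p = (1 - p) ^+ n.
Proof. by rewrite /bernstein bin0 expr0 !mul1r subn0. Qed.

Lemma bernsteinn n p : bernstein n n p = p ^+ n.
Proof. by rewrite /bernstein binn subnn expr0 mulr1 mul1r. Qed.

Lemma bernstein_at0 n k : (0 < k)%N -> bernstein n k 0 = 0.
Proof. by move=> k0; rewrite /bernstein expr0n gtn_eqF // mulr0 mul0r. Qed.

Lemma bernstein_at1 n k : (k < n)%N -> bernstein n k 1 = 0.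
Proof. by move=> kn; rewrite /bernstein subrr expr0n subn_eq0 leqNgt kn mulr0. Qed.

Lemma sum_bernstein n p : \sum_(k < n.+1) bernstein n k p = 1.
Proof.
have E := exprDn (1 - p) p n; rewrite subrK expr1n in E; rewrite E.
by apply: eq_bigr => k _; rewrite /bernstein -mulrA mulr_natl mulrC.
Qed.

Lemma bernstein_rev n k p : (k <= n)%N ->
  bernstein n (n - k) (1 - p) = bernstein n k p.
Proof.
by move=> kn; rewrite /bernstein bin_sub // subKn // opprB addrCA subrr addr0 mulrAC.
Qed.

End Bernstein.

Section SecondDifference.
Variable R : realFieldType.
Implicit Types (f : R -> R) (P : {poly R}) (a x h : R).

Definition second_diff f x h := f (x + h) + f (x - h) - 2 * f x.

Lemma second_diff_sum (I : Type) (r : seq I) (F : I -> R -> R) x h :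
  second_diff (fun q => \sum_(i <- r) F i q) x h = \sum_(i <- r) second_diff (F i) x h.
Proof. by rewrite /second_diff -!big_split /= mulr_sumr -sumrB. Qed.

Lemma second_diff_poly_le P x : exists2 C, 0 <= C &
  forall h, `|h| <= 1 -> `|second_diff (horner P) x h| <= C * h ^+ 2.
Proof.
exists (2 * \sum_(i < size P) `|P^`N(i).[x]|); first by rewrite mulr_ge0 ?sumr_ge0.
move=> h h1; have c (u v : R) : GRing.comm u v := mulrC u v.
rewrite /second_diff (nderiv_taylor P (c x h)) (nderiv_taylor P (c x (- h))).
rewrite -[x in P.[x]]addr0 (nderiv_taylor P (c x 0)).
rewrite mulr_sumr -!big_split -sumrB /= -mulrA mulr_suml mulr_sumr.
apply: (le_trans (ler_norm_sum _ _ _)); apply: ler_sum => i _.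
have -> : P^`N(i).[x] * h ^+ i + P^`N(i).[x] * (- h) ^+ i - 2 * (P^`N(i).[x] * 0 ^+ i)
   = P^`N(i).[x] * (h ^+ i + (- h) ^+ i - 2 * 0 ^+ i) by ring.
rewrite normrM mulrCA ler_wpM2l //.
case: i => -[|[|i]] _ /=; rewrite ?expr0 ?expr1 ?expr0n /=.
- have -> : 1 + 1 - 2 * 1 = 0 :> R by ring.
  by rewrite normr0 mulr_ge0 ?sqr_ge0.
- by rewrite mulr0 subr0 subrr normr0 mulr_ge0 ?sqr_ge0.
rewrite mulr0 subr0 (le_trans (ler_normD _ _)) // !normrX normrN.
have : `|h| ^+ i.+2 <= `|h| ^+ 2 by apply: ler_wiXn2l.
by rewrite real_normK ?num_real //; lra.
Qed.

Lemma second_diff_poly_dist_ge P a x : a != x -> exists2 C, 0 <= C &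
  forall h, 0 < h <= 1 -> h < `|x - a| ->
  - (C * h ^+ 2) <= second_diff (fun q => P.[q] * `|q - a|) x h.
Proof.
move=> ax; have [C C0 hC] := second_diff_poly_le (P * ('X - a%:P)) x.
exists C => // h /andP[h0 h1] hxa.
have /hC : `|h| <= 1 by rewrite gtr0_norm.
rewrite /second_diff !hornerM !hornerXsubC ler_norml => /andP[lo hi].
have [xa|xa] := ltP a x.
  move: hxa; rewrite gtr0_norm ?subr_gt0 // => hxa.
  by rewrite !gtr0_norm ?subr_gt0 //; lra.
move: hxa; rewrite ler0_norm ?subr_le0 // => hxa.
by rewrite !ltr0_norm ?subr_lt0 //; lra.
Qed.

Lemma second_diff_dist_at f x h : 0 < h ->
  second_diff (fun q => f q * `|q - x|) x h = h * (f (x + h) + f (x - h)).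
Proof.
move=> h0; rewrite /second_diff subrr normr0 mulr0 mulr0 subr0 addrAC subrr add0r.
by rewrite addrAC subrr add0r normrN gtr0_norm // mulrDr !(mulrC h).
Qed.

Lemma norm_sub_shift x q a e : `|x - q| < `|x - a| / 2 -> `|e| < `|x - a| / 2 ->
  `|q - (a + e)| = `|q - a| + Num.sg (a - x) * e.
Proof.
rewrite !ltr_norml => /andP[q1 q2] /andP[e1 e2].
have [xa|xa|ax] := ltgtP a x; last by move: e1 e2; rewrite ax subrr normr0; lra.
- move: q1 q2 e1 e2; rewrite gtr0_norm ?subr_gt0 // => q1 q2 e1 e2.
  have d1 : 0 < q - (a + e) by lra.
  have d2 : 0 < q - a by lra.
  by rewrite ltr0_sg ?subr_lt0 // (gtr0_norm d1) (gtr0_norm d2); lra.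
- move: q1 q2 e1 e2; rewrite ltr0_norm ?subr_lt0 // => q1 q2 e1 e2.
  have d1 : q - (a + e) < 0 by lra.
  have d2 : q - a < 0 by lra.
  by rewrite gtr0_sg ?subr_gt0 // (ltr0_norm d1) (ltr0_norm d2); lra.
Qed.

End SecondDifference.

Section SupNorm.
Variable R : realType.
Implicit Types (f : R -> R) (p : R).

Lemma unit_intE : @unit_int R = `[0, 1]%classic.
Proof. by apply/seteqP; split => x /=; rewrite in_itv. Qed.

Lemma unit_int1B p : unit_int p -> unit_int (1 - p).
Proof. by rewrite /unit_int /= => /andP[p0 p1]; apply/andP; split; lra. Qed.

Lemma supnorm01_max f c : unit_int c ->
  (forall p, unit_int p -> 0 <= f p <= f c) -> supnorm01 f = f c.
Proof.
move=> uc fc; have f0 p : unit_int p -> `|f p| = f p.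
  by move=> /fc /andP[fp _]; rewrite ger0_norm.
apply/eqP; rewrite eq_le; apply/andP; split.
  apply: ge_sup; first by exists `|f c|, c.
  by move=> _ [p up <-]; rewrite f0 //; case/andP: (fc p up).
rewrite -(f0 c uc); apply: ub_le_sup; last by exists c.
by exists (f c) => _ [p up <-]; rewrite f0 //; case/andP: (fc p up).
Qed.

Lemma supnorm01_1B f : supnorm01 (fun p => f (1 - p)) = supnorm01 f.
Proof.
rewrite /supnorm01; congr sup; apply/seteqP; split => _ [p up <-].
  by exists (1 - p); [exact: unit_int1B|].
by exists (1 - p); [exact: unit_int1B|rewrite subKr].
Qed.

End SupNorm.

Section Penalty.
Variables (R : realType) (n : nat).
Implicit Types (a b : 'I_n.+1 -> R) (p : R).

Lemma penaltyE a p : penalty a p = \sum_(k < n.+1) bernstein n k p * `|p - a k|.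
Proof. by []. Qed.

Lemma continuous_bernstein k : continuous (@bernstein R n k).
Proof.
have -> : @bernstein R n k = horner (bernstein_poly R n k).
  by apply: funext => p; rewrite horner_bernstein.
exact: continuous_horner.
Qed.

Lemma continuous_penalty a : continuous (penalty a).
Proof.
apply: continuous_big => [|k _ p]; first exact: add_continuous.
apply: (@continuousM _ _ (bernstein n k) (fun p => `|p - a k|)).
  exact: continuous_bernstein.
apply: (continuous_comp _ (@norm_continuous _ _ _)).
exact: continuousB (@cvg_id _ _) (cvg_cst _).
Qed.

Lemma penalty_ge0 a p : unit_int p -> 0 <= penalty a p.
Proof. by move=> up; apply: sumr_ge0 => k _; rewrite mulr_ge0 ?bernstein_ge0. Qed.

Lemma penalty_at0 a : penalty a 0 = `|a ord0|.
Proof.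
rewrite penaltyE big_ord_recl bernstein0 subr0 expr1n mul1r sub0r normrN.
by rewrite big1 ?addr0 // => k _; rewrite bernstein_at0 ?mul0r.
Qed.

Lemma penalty_at1 a : penalty a 1 = `|1 - a ord_max|.
Proof.
rewrite penaltyE big_ord_recr /= bernsteinn expr1n mul1r.
by rewrite big1 ?add0r // => k _; rewrite bernstein_at1 ?mul0r.
Qed.

Lemma penalty_argmax a :
  exists2 c, unit_int c & forall p, unit_int p -> 0 <= penalty a p <= penalty a c.
Proof.
have [|c c01 cmax] := @EVT_max R (penalty a) 0 1 ler01.
  by apply: continuous_subspaceT; exact: continuous_penalty.
exists c => [|p up]; first by move: c01; rewrite in_itv.
by rewrite penalty_ge0 //= cmax // in_itv.
Qed.

Lemma exists_absmax a : exists x, absmax (penalty a) x.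
Proof.
have [c uc cmax] := penalty_argmax a.
by exists c; split => //; rewrite (supnorm01_max uc cmax).
Qed.

Lemma penalty_le_supnorm01 a p : unit_int p -> penalty a p <= supnorm01 (penalty a).
Proof.
have [c uc cmax] := penalty_argmax a; rewrite (supnorm01_max uc cmax).
by move=> /cmax /andP[].
Qed.

Lemma penalty_lipschitz a b p : unit_int p ->
  penalty b p <= penalty a p + \sum_(k < n.+1) 'C(n, k)%:R * `|b k - a k|.
Proof.
move=> up; rewrite !penaltyE -big_split /=; apply: ler_sum => k _.
have w0 := bernstein_ge0 n k up.
have -> : p - b k = (p - a k) + (a k - b k) by ring.
rewrite (le_trans (ler_wpM2l w0 (ler_normD _ _))) // mulrDr lerD2l distrC.
by rewrite ler_wpM2r ?bernstein_le_binomial.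
Qed.

Lemma penalty_cst c p : penalty (fun _ : 'I_n.+1 => c) p = `|p - c|.
Proof. by rewrite penaltyE -mulr_suml sum_bernstein mul1r. Qed.

Lemma supnorm01_le_half a : optimal a -> supnorm01 (penalty a) <= 1 / 2.
Proof.
move=> [_ opt]; have half01 : admissible (fun _ : 'I_n.+1 => 1 / 2 : R).
  by move=> k; apply/andP; split; lra.
apply: (le_trans (opt _ half01)); have [c uc] := exists_absmax (fun _ : 'I_n.+1 => 1 / 2 : R).
move: uc; rewrite /absmax /unit_int /= => -[/andP[c0 c1] <-].
by rewrite penalty_cst ler_norml; apply/andP; split; lra.
Qed.

Lemma supnorm01_gt0 a : 0 < supnorm01 (penalty a).
Proof.
have u0 : @unit_int R 0 by rewrite /unit_int /= lexx ler01.
have uh : @unit_int R (1 / 2) by rewrite /unit_int /=; apply/andP; split; lra.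
rewrite ltNge; apply/negP => m0.
have a00 : a ord0 = 0.
  apply/normr0_eq0/eqP; rewrite eq_le normr_ge0 andbT -penalty_at0.
  exact: le_trans (penalty_le_supnorm01 a u0) m0.
have : 0 < penalty a (1 / 2).
  rewrite penaltyE big_ord_recl a00 subr0 bernstein0.
  have h2 : `|1 / 2 : R| = 1 / 2 by rewrite ger0_norm //; lra.
  have w0 : 0 < (1 - 1 / 2 : R) ^+ n * `|1 / 2| by rewrite h2 mulr_gt0 ?exprn_gt0; lra.
  by rewrite ltr_pwDl // sumr_ge0 // => k _; rewrite mulr_ge0 ?bernstein_ge0.
by have := penalty_le_supnorm01 a uh; lra.
Qed.

Definition mirror a : 'I_n.+1 -> R := fun k => 1 - a (rev_ord k).

Lemma penalty_mirror a p : penalty (mirror a) p = penalty a (1 - p).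
Proof.
rewrite !penaltyE (reindex_inj rev_ord_inj) /=; apply: eq_bigr => k _.
have kn : (k <= n)%N by rewrite -ltnS.
rewrite /mirror rev_ordK subSS -(bernstein_rev _ kn) subKr.
by rewrite -normrN opprB addrAC.
Qed.

Lemma supnorm01_mirror a : supnorm01 (penalty (mirror a)) = supnorm01 (penalty a).
Proof.
by rewrite -[RHS]supnorm01_1B; congr supnorm01; apply: funext => p; rewrite penalty_mirror.
Qed.

Lemma admissible_mirror a : admissible a -> admissible (mirror a).
Proof. by move=> ha k; have /andP[? ?] := ha (rev_ord k); rewrite /mirror; lra. Qed.

Lemma optimal_mirror a : optimal a -> optimal (mirror a).
Proof.
move=> [ha opt]; split => [|b hb]; first exact: admissible_mirror.
by rewrite supnorm01_mirror -(supnorm01_mirror b) opt //; exact: admissible_mirror.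
Qed.

Lemma absmax_mirror a x : absmax (penalty (mirror a)) x -> absmax (penalty a) (1 - x).
Proof.
by move=> [ux fx]; split; [exact: unit_int1B|rewrite -penalty_mirror fx supnorm01_mirror].
Qed.

Lemma amin_le a k : amin a <= a k.
Proof. by rewrite /amin (bigD1 k) //= ge_min lexx. Qed.

Lemma le_amax a k : a k <= amax a.
Proof. by rewrite /amax (bigD1 k) //= le_max lexx. Qed.

Lemma amin_attained a : exists k, amin a = a k.
Proof.
rewrite /amin; elim/big_ind: _ => [|x y [i ->] [j ->]|i _]; first by exists ord0.
  by case: (leP (a i) (a j)) => _; [exists i|exists j].
by exists i.
Qed.

Lemma amax_attained a : exists k, amax a = a k.
Proof.
rewrite /amax; elim/big_ind: _ => [|x y [i ->] [j ->]|i _]; first by exists ord0.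
  by case: (leP (a i) (a j)) => _; [exists j|exists i].
by exists i.
Qed.

Lemma amin_mirror a : amin (mirror a) = 1 - amax a.
Proof.
have [k ak] := amax_attained a; have [j mj] := amin_attained (mirror a).
apply/eqP; rewrite eq_le; apply/andP; split.
  by have := amin_le (mirror a) (rev_ord k); rewrite /mirror rev_ordK ak.
by rewrite mj /mirror lerD2l lerN2 le_amax.
Qed.

End Penalty.

Section Neighbourhoods.
Variable R : realFieldType.

Lemma near_dist_lt (x e : R) : 0 < e -> \forall q \near x, `|x - q| < e.
Proof. exact: (proj1 (@fcvgrPdist_lt _ _ (nbhs x) _ x) (@cvg_id _ _)). Qed.

Lemma near_right_shift (P : R -> Prop) x :
  (\forall q \near x, P q) -> \forall h \near (0 : R)^'+, P (x + h).
Proof.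
move=> /nbhs_normP [e e0 he]; near=> h; apply: he => /=.
have h0 : 0 < h by near: h; exact: nbhs_right_gt.
rewrite opprD addrA subrr sub0r normrN gtr0_norm //; near: h; exact: nbhs_right_lt.
Unshelve. all: end_near.
Qed.

End Neighbourhoods.

Section FirstOrder.
Variables (R : realType) (n : nat).
Implicit Types (a d : 'I_n.+1 -> R) (t x q : R).

Definition perturb a d t : 'I_n.+1 -> R := fun k => a k + t * d k.

Definition feasible a d := forall k, (0 < d k -> a k < 1) /\ (d k < 0 -> 0 < a k).

(* At a node a k = x the corner of |q - a k| costs |d k| whatever the sign of d k. *)
Definition slope a d x q : R := \sum_(k < n.+1)
  bernstein n k q * (if a k == x then `|d k| else Num.sg (a k - x) * d k).

Lemma near_admissible_perturb a d : admissible a -> feasible a d ->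
  \forall t \near (0 : R)^'+, admissible (perturb a d t).
Proof.
move=> ha fd; apply: filter_forall => k; rewrite /perturb.
have /andP[ak0 ak1] := ha k; have [dpos dneg] := fd k.
have [dk0|dk0|->] := ltgtP (d k) 0; last by near=> t; rewrite mulr0 addr0 ak0 ak1.
- have ak := dneg dk0; near=> t.
  have t0 : 0 < t by near: t; exact: nbhs_right_gt.
  have : t < a k / - d k by near: t; apply: nbhs_right_lt; rewrite divr_gt0 ?oppr_gt0.
  by rewrite ltr_pdivlMr ?oppr_gt0 // => ?; apply/andP; split; nra.
- have ak := dpos dk0; near=> t.
  have t0 : 0 < t by near: t; exact: nbhs_right_gt.
  have : t < (1 - a k) / d k by near: t; apply: nbhs_right_lt; rewrite divr_gt0 ?subr_gt0.
  by rewrite ltr_pdivlMr // => ?; apply/andP; split; nra.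
Unshelve. all: end_near.
Qed.

Lemma not_near_improvement a d : optimal a -> feasible a d ->
  ~ (forall x, unit_int x -> \forall q \near x & t \near (0 : R)^'+,
       unit_int q -> penalty (perturb a d t) q < supnorm01 (penalty a)).
Proof.
move=> [ha opt] fd near_lt.
have cK : compact (@unit_int R) by rewrite unit_intE; exact: segment_compact.
have /(near_covering_withinP _).2 cover := proj1 (compact_near_coveringP _) cK.
have {}near_lt := cover _ _ _ (at_right_proper_filter 0) near_lt.
suff : \forall t \near (0 : R)^'+, False by move=> /filter_ex [].
near=> t.
have adm_t : admissible (perturb a d t) by near: t; exact: near_admissible_perturb.
have lt_t : @unit_int R `<=` (fun q => penalty (perturb a d t) q < supnorm01 (penalty a)).
  by near: t.
have [c uc cmax] := penalty_argmax (perturb a d t).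
have := opt _ adm_t; rewrite (supnorm01_max uc cmax).
by move: (lt_t c uc) => /lt_le_trans /[apply]; rewrite ltxx.
Unshelve. all: end_near.
Qed.

Lemma near_perturb_lt a d x : penalty a x < supnorm01 (penalty a) ->
  \forall q \near x & t \near (0 : R)^'+,
    unit_int q -> penalty (perturb a d t) q < supnorm01 (penalty a).
Proof.
set m := supnorm01 (penalty a) => fx.
set S := \sum_(k < n.+1) 'C(n, k)%:R * `|d k|.
have S0 : 0 <= S by apply: sumr_ge0 => k _; rewrite mulr_ge0.
have e0 : 0 < (m - penalty a x) / 2 by rewrite divr_gt0 // subr_gt0.
near=> q t => uq.
have t0 : 0 < t by near: t; exact: nbhs_right_gt.
have tS : t * S < (m - penalty a x) / 2.
  have : t < (m - penalty a x) / 2 / (S + 1).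
    by near: t; apply: nbhs_right_lt; rewrite divr_gt0 // ltr_wpDl.
  by rewrite ltr_pdivlMr ?ltr_wpDl //; nra.
have fq : `|penalty a x - penalty a q| < (m - penalty a x) / 2.
  by near: q; move: e0; apply: cvgr_dist_lt; exact: continuous_penalty.
have := penalty_lipschitz a (perturb a d t) uq.
have -> : \sum_(k < n.+1) 'C(n, k)%:R * `|perturb a d t k - a k| = t * S.
  rewrite /S mulr_sumr; apply: eq_bigr => k _.
  by rewrite /perturb addrC addKr normrM gtr0_norm // mulrCA.
by move: fq; rewrite ltr_norml; lra.
Unshelve. all: end_near.
Qed.

Lemma continuous_slope a d x : continuous (slope a d x).
Proof.
apply: continuous_big => [|k _ q]; first exact: add_continuous.
apply: (@continuousM _ _ (bernstein n k) (fun=> _)); first exact: continuous_bernstein.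
exact: cvg_cst.
Qed.

Lemma near_penalty_perturb_le a d x :
  \forall q \near x & t \near (0 : R)^'+, unit_int q ->
    penalty (perturb a d t) q <= penalty a q + t * slope a d x q.
Proof.
have near_q : \forall q \near x, forall k, a k != x -> `|x - q| < `|x - a k| / 2.
  apply: (@filter_forall R 'I_n.+1 (fun k q => a k != x -> `|x - q| < `|x - a k| / 2)
    (nbhs x)) => k.
  have [->|ak] := eqVneq (a k) x; first by near=> q.
  have e0 : 0 < `|x - a k| / 2 by rewrite divr_gt0 // normr_gt0 subr_eq0 eq_sym.
  by near=> q => _; near: q; exact: near_dist_lt.
have near_t : \forall t \near (0 : R)^'+,
    forall k, a k != x -> `|t * d k| < `|x - a k| / 2.
  apply: (@filter_forall R 'I_n.+1 (fun k t => a k != x -> `|t * d k| < `|x - a k| / 2)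
    (0 : R)^'+) => k.
  have [->|ak] := eqVneq (a k) x; first by near=> t.
  have e0 : 0 < `|x - a k| / 2 by rewrite divr_gt0 // normr_gt0 subr_eq0 eq_sym.
  near=> t => _.
  have t0 : 0 < t by near: t; exact: nbhs_right_gt.
  have : t < `|x - a k| / 2 / (`|d k| + 1).
    by near: t; apply: nbhs_right_lt; rewrite divr_gt0 // ltr_wpDl.
  rewrite normrM gtr0_norm // ltr_pdivlMr ?ltr_wpDl //; have := normr_ge0 (d k); nra.
near=> q t => uq.
have t0 : 0 < t by near: t; exact: nbhs_right_gt.
have Hq : forall k, a k != x -> `|x - q| < `|x - a k| / 2 by near: q.
have Ht : forall k, a k != x -> `|t * d k| < `|x - a k| / 2 by near: t.
rewrite !penaltyE /slope mulr_sumr -big_split /=; apply: ler_sum => k _.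
rewrite mulrCA -mulrDr ler_wpM2l ?bernstein_ge0 // /perturb.
have [->|ak] := eqVneq (a k) x; last by rewrite (norm_sub_shift (Hq k ak) (Ht k ak)) mulrCA.
by rewrite opprD addrA (le_trans (ler_normD _ _)) // normrN normrM gtr0_norm.
Unshelve. all: end_near.
Qed.

Lemma near_perturb_lt_of_slope a d x : slope a d x x < 0 ->
  \forall q \near x & t \near (0 : R)^'+,
    unit_int q -> penalty (perturb a d t) q < supnorm01 (penalty a).
Proof.
move=> sx; have e0 : 0 < - slope a d x x by rewrite oppr_gt0.
have near_slope : \forall q \near x, slope a d x q < 0.
  near=> q; have : `|slope a d x x - slope a d x q| < - slope a d x x.
    by near: q; exact: cvgr_dist_lt _ _ (@continuous_slope a d x x) _ e0.
  by rewrite ltr_norml; lra.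
have near_neg : \forall q \near x & t \near (0 : R)^'+, 0 < t /\ slope a d x q < 0.
  near=> q t; have t0 : 0 < t by near: t; exact: nbhs_right_gt.
  have sq : slope a d x q < 0 by near: q.
  by split.
apply: filterS2 (near_penalty_perturb_le a d x) near_neg => -[q t] /= le_qt [t0 sq] uq.
by have := le_qt uq; have := penalty_le_supnorm01 a uq; nra.
Unshelve. all: end_near.
Qed.

Lemma absmax_slope_ge0 a d : optimal a -> feasible a d ->
  exists2 x, absmax (penalty a) x & 0 <= slope a d x x.
Proof.
move=> oa fd; apply: contrapT => no_x; apply: (not_near_improvement oa fd) => x ux.
have := penalty_le_supnorm01 a ux; rewrite le_eqVlt => /orP[/eqP fx|]; last first.
  exact: near_perturb_lt.
apply: near_perturb_lt_of_slope; rewrite ltNge; apply/negP => s0.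
by apply: no_x; exists x.
Qed.

Lemma slope_at0 a d :
  slope a d 0 0 = if a ord0 == 0 then `|d ord0| else Num.sg (a ord0) * d ord0.
Proof.
rewrite /slope big_ord_recl bernstein0 subr0 expr1n mul1r subr0.
by rewrite big1 ?addr0 // => k _; rewrite bernstein_at0 ?mul0r.
Qed.

Lemma slope_at1 a d : slope a d 1 1 =
  if a ord_max == 1 then `|d ord_max| else Num.sg (a ord_max - 1) * d ord_max.
Proof.
rewrite /slope big_ord_recr /= bernsteinn expr1n mul1r.
by rewrite big1 ?add0r // => k _; rewrite bernstein_at1 ?mul0r.
Qed.

Lemma slope_off_nodes a d x : (forall k, a k != x) ->
  slope a d x x = \sum_(k < n.+1) bernstein n k x * (Num.sg (a k - x) * d k).
Proof. by move=> ax; apply: eq_bigr => k _; rewrite (negbTE (ax k)). Qed.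

End FirstOrder.

Section Kink.
Variables (R : realType) (n : nat).
Implicit Types (a : 'I_n.+1 -> R).

Lemma second_diff_penalty_ge a i : exists2 C, 0 <= C & forall h, 0 < h <= 1 ->
  unit_int (a i + h) -> unit_int (a i - h) ->
  (forall k, a k != a i -> h < `|a i - a k|) ->
  h * bernstein n i (a i + h) - C * h ^+ 2 <= second_diff (penalty a) (a i) h.
Proof.
set x := a i.
have /choice [C hC] : forall k, exists C : R, 0 <= C /\ (a k != x ->
    forall h, 0 < h <= 1 -> h < `|x - a k| ->
    - (C * h ^+ 2) <= second_diff (fun q => bernstein n k q * `|q - a k|) x h).
  move=> k; have [_|ak] := eqVneq (a k) x; first by exists 0.
  have [C C0 hC] := second_diff_poly_dist_ge (bernstein_poly R n k) ak.
  exists C; split => // _ h h01 hx; have := hC h h01 hx.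
  by under eq_fun do rewrite horner_bernstein.
exists (\sum_k C k); first by apply: sumr_ge0 => k _; case: (hC k).
move=> h /andP[h0 h1] uxp uxm hx.
have -> : h * bernstein n i (x + h) - (\sum_k C k) * h ^+ 2 =
    \sum_k ((if k == i then h * bernstein n i (x + h) else 0) - C k * h ^+ 2).
  by rewrite sumrB -big_mkcond big_pred1_eq mulr_suml.
rewrite (funext (penaltyE a)) second_diff_sum; apply: ler_sum => k _; have [C0 Ck] := hC k.
have h2 : 0 <= h ^+ 2 by rewrite exprn_ge0 ?ltW.
have [akx|akx] := eqVneq (a k) x.
  rewrite akx second_diff_dist_at //.
  have wp := bernstein_ge0 n k uxp; have wm := bernstein_ge0 n k uxm.
  have := mulr_ge0 C0 h2; have := mulr_ge0 (ltW h0) wm; have := mulr_ge0 (ltW h0) wp.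
  by case: eqVneq => [->|_]; lra.
have -> : (k == i) = false by apply: contraNF akx => /eqP ->.
by rewrite sub0r Ck ?hx // h0.
Qed.

Lemma not_absmax_interior_node a i : 0 < a i < 1 -> ~ absmax (penalty a) (a i).
Proof.
move=> ai01 [_ fx]; have [C C0 hC] := second_diff_penalty_ge a i.
move: ai01 fx hC; set x := a i => /andP[x0 x1] fx hC.
have w0 : 0 < bernstein n i x by rewrite bernstein_gt0 // ?x0 ?x1 // -ltnS.
have near_w : \forall h \near (0 : R)^'+, bernstein n i x / 2 < bernstein n i (x + h).
  apply: (near_right_shift (P := fun q => bernstein n i x / 2 < bernstein n i q)).
  near=> q.
  have : `|bernstein n i x - bernstein n i q| < bernstein n i x / 2.
    by near: q; apply: cvgr_dist_lt; [exact: continuous_bernstein|rewrite divr_gt0].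
  by rewrite ltr_norml; lra.
have near_h : \forall h \near (0 : R)^'+, [/\ 0 < h < x, h < 1 - x,
    forall k, a k != x -> h < `|x - a k|, h * (C + 1) < bernstein n i x / 2
    & bernstein n i x / 2 < bernstein n i (x + h)].
  near=> h; split.
  - by apply/andP; split; near: h; [exact: nbhs_right_gt|exact: nbhs_right_lt].
  - by near: h; apply: nbhs_right_lt; rewrite subr_gt0.
  - near: h; apply: (@filter_forall R 'I_n.+1
      (fun k h => a k != x -> h < `|x - a k|) (0 : R)^'+) => k.
    have [->|ak] := eqVneq (a k) x; first by near=> h.
    near=> h => _; near: h; apply: nbhs_right_lt.
    by rewrite normr_gt0 subr_eq0 eq_sym.
  - have : h < bernstein n i x / 2 / (C + 1).
      by near: h; apply: nbhs_right_lt; rewrite !divr_gt0 // ltr_wpDl.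
    by rewrite ltr_pdivlMr // ltr_wpDl.
  - by near: h.
have [h [/andP[h0 hx] h1x hk hC1 wh]] := filter_ex near_h.
have up : unit_int (x + h) by rewrite /unit_int /=; lra.
have um : unit_int (x - h) by rewrite /unit_int /=; lra.
have h01 : 0 < h <= 1 by rewrite h0 /=; lra.
have := hC h h01 up um hk; rewrite /second_diff.
have := penalty_le_supnorm01 a up; have := penalty_le_supnorm01 a um.
by rewrite fx; nra.
Unshelve. all: end_near.
Qed.

End Kink.

Section SlopeEstimates.
Variables (R : realType) (n : nat).
Implicit Types (a : 'I_n.+1 -> R) (x : R).

Lemma sum_bernstein_eq_ge a c x : (exists k, a k = c) -> 0 <= x <= 1 ->
  x ^+ n * (1 - x) ^+ n <= \sum_(k < n.+1) bernstein n k x * (a k == c)%:R.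
Proof.
move=> [j <-] x01; rewrite (bigD1 j) //= eqxx mulr1 -[leLHS]addr0 lerD //.
  by rewrite bernstein_ge_prod // -ltnS.
by apply: sumr_ge0 => k _; rewrite mulr_ge0 ?bernstein_ge0.
Qed.

Lemma top_correction_lt b x : 0 < x < 1 -> b != x -> b <= 1 ->
  x ^+ n * (Num.sg (b - x) * ((1 - b) ^+ n / 2)) < x ^+ n * (1 - x) ^+ n.
Proof.
move=> /andP[x0 x1] bx b1; rewrite ltr_pM2l ?exprn_gt0 //.
have p0 : 0 < (1 - x) ^+ n by rewrite exprn_gt0 // subr_gt0.
have q0 : 0 <= (1 - b) ^+ n by rewrite exprn_ge0 // subr_ge0.
have [xb|bx'] := ltP x b.
  rewrite gtr0_sg ?subr_gt0 // mul1r.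
  have : (1 - b) ^+ n <= (1 - x) ^+ n by rewrite lerXn2r ?nnegrE ?subr_ge0 //; lra.
  lra.
by rewrite ltr0_sg ?subr_lt0 ?lt_neqAle ?bx // mulN1r; lra.
Qed.

Lemma lower_first_balance (b x K S T : R) : 0 <= x < 1 -> b != x -> 0 <= K ->
  (b < x -> 2 <= K * x ^+ n) -> S <= - (K * (x ^+ n * (1 - x) ^+ n)) ->
  T < x ^+ n * (1 - x) ^+ n -> (1 - x) ^+ n * (Num.sg (b - x) * -1) + S + T < 0.
Proof.
move=> /andP[x0 x1] bx K0 K_ge S_le T_lt.
have P0 : 0 < (1 - x) ^+ n by rewrite exprn_gt0 // subr_gt0.
have xP : x ^+ n * (1 - x) ^+ n <= (1 - x) ^+ n := ler_piMl (ltW P0) (exprn_ile1 n x0 (ltW x1)).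
have KP : 0 <= K * (x ^+ n * (1 - x) ^+ n).
  exact: mulr_ge0 K0 (mulr_ge0 (exprn_ge0 n x0) (ltW P0)).
have [b_lt|x_lt] := ltP b x.
  have := ler_wpM2r (ltW P0) (K_ge b_lt); rewrite -mulrA.
  by rewrite ltr0_sg ?subr_lt0 // mulN1r opprK mulr1; lra.
rewrite gtr0_sg ?mulr1 ?mulrN1; first lra.
by rewrite subr_gt0 lt_neqAle x_lt andbT eq_sym.
Qed.

Lemma absmax1_lt a : admissible a -> absmax (penalty a) 1 -> a ord_max < 1.
Proof.
move=> ha [_ f1]; have /andP[_ an1] := ha ord_max.
rewrite lt_neqAle an1 andbT; apply/eqP => an.
by move: (supnorm01_gt0 a); rewrite -f1 penalty_at1 an subrr normr0 ltxx.
Qed.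

Lemma absmax_neq_interior a x k : absmax (penalty a) x -> 0 < x < 1 -> a k != x.
Proof.
by move=> Mx x01; apply/eqP => akx; apply: (@not_absmax_interior_node _ _ a k); rewrite akx.
Qed.

Definition bump j (v : R) : 'I_n.+1 -> R := fun k => (k == j)%:R * v.

Section OffNodes.
Variables (a : 'I_n.+1 -> R) (x : R).
Hypothesis no_node : forall k, a k != x.

Lemma slope_off_nodesD d1 d2 : slope a (d1 \+ d2) x x = slope a d1 x x + slope a d2 x x.
Proof. by rewrite !slope_off_nodes // -big_split; apply: eq_bigr => k _ /=; ring. Qed.

Lemma slope_bump j v : slope a (bump j v) x x = bernstein n j x * (Num.sg (a j - x) * v).
Proof.
rewrite slope_off_nodes // (bigD1 j) //= /bump eqxx mul1r big1 ?addr0 // => k /negbTE ->.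
by rewrite mul0r !mulr0.
Qed.

Lemma slope_raise_eq c K : c < x -> 0 <= x <= 1 -> (exists k, a k = c) -> 0 <= K ->
  slope a (fun k => K * (a k == c)%:R) x x <= - (K * (x ^+ n * (1 - x) ^+ n)).
Proof.
move=> cx x01 ac K0; rewrite slope_off_nodes //.
have -> : \sum_(k < n.+1) bernstein n k x * (Num.sg (a k - x) * (K * (a k == c)%:R)) =
    - (K * \sum_(k < n.+1) bernstein n k x * (a k == c)%:R).
  rewrite mulr_sumr -sumrN; apply: eq_bigr => k _.
  have [->|_] := eqVneq (a k) c; last by rewrite !mulr0 oppr0.
  by rewrite ltr0_sg ?subr_lt0 //; ring.
by rewrite lerN2 ler_wpM2l // sum_bernstein_eq_ge.
Qed.

End OffNodes.

End SlopeEstimates.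

Section DescentDirections.
Variables (R : realType) (n : nat).
Hypothesis n_gt0 : (0 < n)%N.
Implicit Types (a : 'I_n.+1 -> R) (x : R).

(* Raising a_n at this rate removes a maximum at 1, while at x in (0, 1) it
   costs less than x^n (1 - x)^n, the least gain from raising the smallest
   estimates. *)
Definition top_weight a : R := (1 - a ord_max) ^+ n / 2.

Lemma top_weight_ge0 a : admissible a -> 0 <= top_weight a.
Proof. by move=> ha; have /andP[_ ?] := ha ord_max; rewrite divr_ge0 ?exprn_ge0 ?subr_ge0. Qed.

Lemma top_weight_gt0 a : a ord_max < 1 -> 0 < top_weight a.
Proof. by move=> an1; rewrite divr_gt0 ?exprn_gt0 ?subr_gt0. Qed.

Lemma lt1_of_top_weight_gt0 a : admissible a -> 0 < top_weight a -> a ord_max < 1.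
Proof.
move=> ha w0; have /andP[_ an1] := ha ord_max; rewrite lt_neqAle an1 andbT.
by apply: contraTneq w0 => an; rewrite /top_weight an subrr expr0n gtn_eqF // mul0r ltxx.
Qed.

Lemma ord0_neq_max : ord0 != ord_max :> 'I_n.+1.
Proof. by rewrite -val_eqE /= eq_sym -lt0n. Qed.

Lemma slope_top_lt a x : admissible a -> 0 < x < 1 -> (forall k, a k != x) ->
  slope a (bump ord_max (top_weight a)) x x < x ^+ n * (1 - x) ^+ n.
Proof.
move=> ha x01 no_node; have /andP[_ an1] := ha ord_max.
by rewrite slope_bump // bernsteinn; exact: top_correction_lt.
Qed.

Lemma not_all_absmax_gt_amin a : optimal a ->
  ~ (forall x, absmax (penalty a) x -> amin a < x).
Proof.
move=> oa gt_min; have ha := oa.1; have e0 := top_weight_ge0 ha.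
pose d := (fun k => 1 * (a k == amin a)%:R) \+ bump ord_max (top_weight a).
have min_lt1 : amin a < 1.
  have [c Mc] := exists_absmax a; have [/andP[_ c1] _] := Mc.
  by have := gt_min c Mc; lra.
have d_ge0 k : 0 <= d k.
  by rewrite /d /bump /= mul1r addr_ge0 ?ler0n // mulr_ge0 ?ler0n.
have fd : feasible a d.
  move=> k; split => dk; last by move: dk; rewrite ltNge d_ge0.
  have [->//|akm] := eqVneq (a k) (amin a).
  move: dk; rewrite /d /bump /= (negbTE akm) mulr0 add0r.
  have [->|_] := eqVneq k ord_max; last by rewrite mul0r ltxx.
  by rewrite mul1r; exact: lt1_of_top_weight_gt0.
have [x Mx] := absmax_slope_ge0 oa fd; apply/negP; rewrite -ltNge.
have [/andP[_ x1] _] := Mx; have xm := gt_min x Mx.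
have [k0 ak0] := amin_attained a; have /andP[ak00 _] := ha k0.
have [x_eq1|x_lt1] := eqVneq x 1.
  rewrite x_eq1 in Mx *; have an1 := absmax1_lt ha Mx.
  rewrite slope_at1 lt_eqF // ltr0_sg ?subr_lt0 // mulN1r oppr_lt0 /d /bump /= eqxx.
  by rewrite mul1r ltr_wpDl ?ler0n // mul1r top_weight_gt0.
have x0 : 0 < x by rewrite ak0 in xm; lra.
have x01 : 0 < x < 1 by rewrite x0 lt_neqAle x_lt1 x1.
have no_node k : a k != x := absmax_neq_interior k Mx x01.
rewrite slope_off_nodesD //.
have := slope_raise_eq no_node xm Mx.1 (ex_intro _ k0 (esym ak0)) ler01.
have := slope_top_lt ha x01 no_node; lra.
Qed.

Lemma absmax0_not_all_ge_amin a : optimal a -> absmax (penalty a) 0 ->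
  ~ (forall x, absmax (penalty a) x -> amin a <= x).
Proof.
move=> oa M0 ge_min; have ha := oa.1; have e0 := top_weight_ge0 ha.
have a0_gt0 : 0 < a ord0.
  have /andP[a00 _] := ha ord0.
  by move: (supnorm01_gt0 a); rewrite -M0.2 penalty_at0 ger0_norm.
have [k0 ak0] := amin_attained a.
have ak0_0 : a k0 = 0.
  by have /andP[? _] := ha k0; have := ge_min 0 M0; rewrite ak0; lra.
set K := 2 / a ord0 ^+ n.
have K0 : 0 <= K by rewrite divr_ge0 ?exprn_ge0 // ltW.
have K_ge y : a ord0 < y -> 2 <= K * y ^+ n.
  move=> ay; have y0 : 0 <= y by rewrite ltW // (lt_trans a0_gt0).
  rewrite /K mulrAC ler_pdivlMr ?exprn_gt0 // ler_pM2l //.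
  by rewrite lerXn2r ?nnegrE ?y0 ?(ltW a0_gt0) ?(ltW ay).
pose d := bump ord0 (-1) \+ (fun k => K * (a k == 0)%:R) \+ bump ord_max (top_weight a).
have dE k : d k = - (k == ord0)%:R + K * (a k == 0)%:R + (k == ord_max)%:R * top_weight a.
  by rewrite /d /bump /= mulrN1.
have fd : feasible a d.
  move=> k; rewrite dE; split => dk.
    have [->|ak] := eqVneq (a k) 0; first exact: ltr01.
    move: dk; rewrite (negbTE ak) mulr0 addr0.
    have [kn|kn] := eqVneq k ord_max; last by rewrite mul0r addr0 oppr_gt0 ltNge ler0n.
    rewrite kn eq_sym (negbTE ord0_neq_max) oppr0 add0r mul1r.
    exact: lt1_of_top_weight_gt0.
  have [->//|k0'] := eqVneq k ord0.
  by move: dk; rewrite (negbTE k0') oppr0 add0r ltNge addr_ge0 // mulr_ge0 ?ler0n.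
have [x Mx] := absmax_slope_ge0 oa fd; apply/negP; rewrite -ltNge.
have [/andP[x0 x1] _] := Mx.
have [x_eq0|x_neq0] := eqVneq x 0.
  rewrite x_eq0 slope_at0 gt_eqF // gtr0_sg // mul1r dE eqxx gt_eqF //.
  by rewrite (negbTE ord0_neq_max) mulr0 mul0r !addr0 oppr_lt0 ltr01.
have [x_eq1|x_lt1] := eqVneq x 1.
  rewrite x_eq1 in Mx *; have an1 := absmax1_lt ha Mx.
  rewrite slope_at1 lt_eqF // ltr0_sg ?subr_lt0 // mulN1r oppr_lt0 dE eqxx.
  rewrite eq_sym (negbTE ord0_neq_max) oppr0 add0r mul1r.
  by apply: ltr_wpDl; [rewrite mulr_ge0 ?ler0n|exact: top_weight_gt0].
have x_gt0 : 0 < x by rewrite lt_neqAle eq_sym x_neq0.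
have x01 : 0 < x < 1 by rewrite x_gt0 lt_neqAle x_lt1 x1.
have no_node k : a k != x := absmax_neq_interior k Mx x01.
rewrite !slope_off_nodesD // slope_bump // bernstein0.
apply: (lower_first_balance _ (no_node ord0) K0 (K_ge x)).
- by rewrite x0; case/andP: x01.
- exact: (slope_raise_eq no_node x_gt0 Mx.1 (ex_intro _ k0 ak0_0) K0).
- exact: slope_top_lt ha x01 no_node.
Qed.

End DescentDirections.

Section OptimalEstimates.
Variables (R : realType) (n : nat).
Implicit Types (a : 'I_n.+1 -> R).

Lemma optimal_ends_half a : optimal a -> a ord0 <= 1 / 2 <= a ord_max.
Proof.
move=> oa; have /andP[a00 _] := oa.1 ord0; have /andP[_ an1] := oa.1 ord_max.
have u0 : @unit_int R 0 by rewrite /unit_int /= lexx ler01.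
have u1 : @unit_int R 1 by rewrite /unit_int /= lexx ler01.
have := penalty_le_supnorm01 a u0; have := penalty_le_supnorm01 a u1.
rewrite penalty_at0 penalty_at1 !ger0_norm ?subr_ge0 //.
by have := supnorm01_le_half oa; lra.
Qed.

Hypothesis n_gt0 : (0 < n)%N.

Lemma exists_absmax_lt_amin a : optimal a -> exists x, absmax (penalty a) x /\ x < amin a.
Proof.
move=> oa; apply: contrapT => none; have ha := oa.1.
have ge_min x : absmax (penalty a) x -> amin a <= x.
  by move=> Mx; rewrite leNgt; apply/negP => xm; apply: none; exists x.
have [M0|nM0] := pselect (absmax (penalty a) 0).
  by apply: (absmax0_not_all_ge_amin n_gt0 oa M0).
apply: (not_all_absmax_gt_amin n_gt0 oa) => x Mx.
rewrite lt_neqAle ge_min // andbT; apply/eqP => mx.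
have [k ak] := amin_attained a; have [/andP[x0 x1] _] := Mx.
have [x_eq0|x_neq0] := eqVneq x 0; first by apply: nM0; rewrite -x_eq0.
have [x_eq1|x_lt1] := eqVneq x 1.
  rewrite x_eq1 in Mx mx; have := absmax1_lt ha Mx.
  by have := amin_le a ord_max; lra.
have x01 : 0 < x < 1 by rewrite lt_neqAle eq_sym x_neq0 x0 lt_neqAle x_lt1 x1.
by have := absmax_neq_interior k Mx x01; rewrite -ak mx eqxx.
Qed.

Lemma exists_absmax_gt_amax a : optimal a -> exists x, absmax (penalty a) x /\ amax a < x.
Proof.
move=> oa; have [x [Mx xm]] := exists_absmax_lt_amin (optimal_mirror oa).
exists (1 - x); split; first exact: absmax_mirror.
by move: xm; rewrite amin_mirror; lra.
Qed.

Lemma optimal_interior a k : optimal a -> 0 < a k < 1.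
Proof.
move=> oa; have [x [[/andP[x0 _] _] xm]] := exists_absmax_lt_amin oa.
have [y [[/andP[_ y1] _] ym]] := exists_absmax_gt_amax oa.
by have := amin_le a k; have := le_amax a k; lra.
Qed.

Lemma exists_absmax_between_ends a : optimal a ->
  exists x, absmax (penalty a) x /\ a ord0 < x < a ord_max.
Proof.
move=> oa; apply: contrapT => none.
have /andP[a0h anh] := optimal_ends_half oa.
have fd : feasible a (bump ord0 (-1) \+ bump ord_max 1).
  by move=> k; have /andP[? ?] := optimal_interior k oa.
have [x Mx] := absmax_slope_ge0 oa fd; apply/negP; rewrite -ltNge.
have no_node k : a k != x.
  by apply/eqP => akx; apply: (not_absmax_interior_node (optimal_interior k oa)); rewrite akx.
have [/andP[x0 x1] _] := Mx.
rewrite slope_off_nodesD // !slope_bump // bernstein0 bernsteinn.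
have [xa0|a0x] := ltP x (a ord0).
  rewrite !gtr0_sg ?subr_gt0 //; last by lra.
  have : x ^+ n < (1 - x) ^+ n by rewrite ltrXn2r ?gtn_eqF //; lra.
  lra.
have xan : a ord_max < x.
  rewrite ltNge le_eqVlt eq_sym (negbTE (no_node _)) /=; apply/negP => xa.
  apply: none; exists x; split => //.
  by rewrite xa andbT lt_neqAle a0x andbT; exact: no_node.
have a0x' : a ord0 < x by rewrite lt_neqAle a0x andbT; exact: no_node.
rewrite !ltr0_sg ?subr_lt0 //.
have : (1 - x) ^+ n < x ^+ n by rewrite ltrXn2r ?gtn_eqF //; lra.
lra.
Qed.

End OptimalEstimates.

Unset Implicit Arguments.

Theorem lemma2p1 (R : realType) (n : nat) (a : 'I_n.+1 -> R) :
  (0 < n)%N -> optimal a ->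
  let M := absmax (penalty a) in
  (forall i : 'I_n.+1, ~ M (a i)) /\
  ((exists x, M x /\ x < amin a) /\ (exists x, M x /\ amax a < x)) /\
  (a ord0 <= 1 / 2 <= a ord_max /\ exists x, M x /\ a ord0 < x < a ord_max).
Proof.
move=> n_gt0 oa M; split.
  by move=> i; apply: not_absmax_interior_node; exact: optimal_interior.
split; first by split; [exact: exists_absmax_lt_amin|exact: exists_absmax_gt_amax].
by split; [exact: optimal_ends_half|exact: exists_absmax_between_ends].
Qed.
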